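(* Let $l\ge 0$ be an integer and $v\in\{0,1\}$. Let $\mathcal{D}_{n}$ be the set of partitions into exactly $n$ distinct parts, and for $\pi=(\lambda_1,\lambda_2,\dots)$ let $\mathcal{O}(\pi)=\lambda_1+\lambda_3+\lambda_5+\cdots$. For integers $N\ge0$, $k\ge1$, $m\ge0$ let $\mathcal{P}_N(k,m)$ be the set of partitions $(\lambda_1,\dots,\lambda_N)$ into exactly $N$ parts with $\lambda_N\ge k$ and $\lambda_i-\lambda_{i+1}\ge m$ for $1\le i\le N-1$ ($\mathcal{P}_0(k,m)$ contains only the empty partition). For a partition $\pi=(\lambda_1,\dots,\lambda_N)$ with $N\ge1$ let \[\omega_{2,2}(\pi)=(\lambda_N-1)\prod_{i=1}^{N-1}(\lambda_i-\lambda_{i+1}-1),\qquad \tilde\omega_1(\pi)=\prod_{i=1}^{N-1}(\lambda_i-\lambda_{i+1}-1),\] and let $\omega_{2,2}$ of the empty partition be $1$. Then \[\sum_{\pi\in\mathcal{D}_{2l+v}}q^{\mathcal{O}(\pi)}=\sum_{\pi\in\mathcal{P}_{l+v}(2-v,2)}\big[(1-v)\,\omega_{2,2}(\pi)+v\,\tilde\omega_1(\pi)\big]q^{|\pi|}.\]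
   Context: A partition is a finite weakly decreasing sequence of positive integers; $|\pi|$ is the sum of its parts. *)

From mathcomp Require Import all_boot.
Set Implicit Arguments. Unset Strict Implicit. Unset Printing Implicit Defensive.

(* Partitions are represented as seq nat, listed (lambda_1, lambda_2, ...),
   i.e. index 0 holds lambda_1. *)

Definition is_partition (s : seq nat) : bool :=
  sorted geq s && all (fun x => 0 < x) s.

Definition in_D (n : nat) (s : seq nat) : bool :=
  is_partition s && sorted gtn s && (size s == n).

Definition Ostat (s : seq nat) : nat :=
  \sum_(i < size s | ~~ odd i) nth 0 s i.

Definition psize (s : seq nat) : nat := sumn s.

Definition in_P (N k m : nat) (s : seq nat) : bool :=
  [&& is_partition s, size s == N,
      (0 < N) ==> (k <= nth 0 s N.-1)
    & sorted (fun a b => b + m <= a) s].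

Definition gapprod (s : seq nat) : nat :=
  \prod_(i < (size s).-1) (nth 0 s i - nth 0 s i.+1 - 1).

Definition omega22 (s : seq nat) : nat :=
  if s is [::] then 1 else (nth 0 s (size s).-1 - 1) * gapprod s.

Definition omega1t (s : seq nat) : nat := gapprod s.

(* Coefficient of q^M in sum_{pi : P pi, size pi = len} w(pi) q^(stat pi).
   Sequences are enumerated with entries <= M; for both generating functions
   of the theorem the statistic dominates the largest part, so this bound
   does not drop any term. *)
Definition gf_coef (len M : nat) (P : seq nat -> bool) (stat w : seq nat -> nat)
  : nat :=
  \sum_(t : len.-tuple 'I_M.+1 | P (map val t) && (stat (map val t) == M))
     w (map val t).

From mathcomp Require Import all_boot zify.
Set Implicit Arguments. Unset Strict Implicit. Unset Printing Implicit Defensive.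

(* Both sides are computed by the same recursion on the largest parts. Taking
   the two largest parts x > y of a distinct partition contributes x to O and
   leaves a distinct partition with parts below y; on the other side, taking
   the largest part x of pi contributes x to |pi|, and the factor
   x - lambda_2 - 1 of the weight counts exactly the admissible y, namely
   lambda_2 < y < x. Peeling off l such pairs (resp. parts) reduces the
   theorem to the empty partition (v = 0) or to one-part partitions (v = 1). *)

Fixpoint seqs_below (n B : nat) : seq (seq nat) :=
  if n is n'.+1 then [seq x :: s | x <- iota 0 B, s <- seqs_below n' B]
  else [:: [::]].

Lemma mem_seqs_below n B s :
  (s \in seqs_below n B) = (size s == n) && all (fun x => x < B) s.
Proof.
elim: n s => [|n IH] s /=; first by case: s.
apply/allpairsP/idP => [[[x t] [/= + + ->]]|].
  by rewrite mem_iota IH => xB /andP[/eqP tn tB] /=; rewrite tn eqxx tB andbT.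
case: s => [//|x s] /= /andP[sn /andP[xB sB]]; exists (x, s).
by rewrite /= mem_iota IH -eqSS sn sB.
Qed.

Lemma uniq_seqs_below n B : uniq (seqs_below n B).
Proof.
elim: n => [//|n IH] /=; apply: allpairs_uniq => //; first exact: iota_uniq.
by move=> [a b] [c d] _ _ /= [-> ->].
Qed.

Lemma big_tuple_seqs_below n b (P : pred (seq nat)) (F : seq nat -> nat) :
  \sum_(t : n.-tuple 'I_b.+1 | P (map val t)) F (map val t)
  = \sum_(s <- seqs_below n b.+1 | P s) F s.
Proof.
have perm_vals : perm_eq (seqs_below n b.+1)
    [seq map val (val t) | t : n.-tuple 'I_b.+1 <- index_enum _].
  apply: uniq_perm; first exact: uniq_seqs_below.
    rewrite map_inj_uniq ?index_enum_uniq // => t1 t2.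
    by move/(inj_map val_inj)/val_inj.
  move=> s; rewrite mem_seqs_below; apply/idP/mapP.
    case/andP=> /eqP sn /allP sB.
    have size_ords : size (map (@inord b) s) == n by rewrite size_map sn.
    exists (Tuple size_ords); first exact: mem_index_enum.
    rewrite /= -map_comp -[LHS]map_id; apply/eq_in_map => x xs /=.
    by rewrite inordK // sB.
  case=> t _ ->; rewrite size_map size_tuple eqxx /=.
  by apply/allP => x /mapP[y _ ->].
by rewrite (perm_big _ perm_vals) big_map.
Qed.

Lemma Ostat_nil : Ostat [::] = 0.
Proof. by rewrite /Ostat big_ord0. Qed.

Lemma Ostat_seq1 x : Ostat [:: x] = x.
Proof. by rewrite /Ostat big_mkcond big_ord_recl big_ord0 /= addn0. Qed.

Lemma Ostat_cons2 x y s : Ostat [:: x, y & s] = x + Ostat s.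
Proof.
rewrite /Ostat /= big_mkcond !big_ord_recl /= add0n -big_mkcond /=.
by congr (_ + _); apply: eq_bigl => i; rewrite negbK.
Qed.

Lemma gapprod_seq1 x : gapprod [:: x] = 1.
Proof. by rewrite /gapprod big_ord0. Qed.

Lemma gapprod_cons2 x y s : gapprod [:: x, y & s] = (x - y - 1) * gapprod (y :: s).
Proof. by rewrite /gapprod big_ord_recl. Qed.

Lemma omega22_cons x s : omega22 (x :: s) = (x - head 0 s - 1) * omega22 s.
Proof.
case: s => [|y s]; first by rewrite /omega22 gapprod_seq1 subn0 muln1.
by rewrite /omega22 gapprod_cons2 mulnCA.
Qed.

Definition dpart_lt (c : nat) (s : seq nat) : bool :=
  path gtn c s && all (fun x => 0 < x) s.

Lemma dpart_lt_cons c x s :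
  dpart_lt c (x :: s) = [&& x < c, 0 < x & dpart_lt x s].
Proof. by rewrite /dpart_lt /= -!andbA; do !bool_congr. Qed.

Lemma dpart_lt_leq c d s : c <= d -> dpart_lt c s -> dpart_lt d s.
Proof.
case: s => [//|x s] cd; rewrite !dpart_lt_cons => /and3P[xc -> ->].
by rewrite (leq_trans xc cd).
Qed.

Lemma dpart_lt_head x y s : dpart_lt x s -> y < x ->
  (0 < y) && dpart_lt y s = (head 0 s < y).
Proof.
case: s => [|h s]; first by rewrite /dpart_lt /= !andbT.
by rewrite !dpart_lt_cons /= => /and3P[_ -> ->]; rewrite !andbT; case: y.
Qed.

Lemma sum_between a x B : x <= B -> \sum_(0 <= y < B | a < y < x) 1 = x - a - 1.
Proof.
move=> xB; suff -> : \sum_(0 <= y < B | a < y < x) 1 = minn B x - a.+1 by lia.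
elim: B {xB} => [|B IH]; first by rewrite big_geq // min0n.
by rewrite big_mkcond big_nat_recr //= -big_mkcond IH; case: ifP => /andP; lia.
Qed.

Lemma count_inserts B x s : x <= B ->
  \sum_(y <- iota 0 B | [&& y < x, 0 < y & dpart_lt y s]) 1
  = dpart_lt x s * (x - head 0 s - 1).
Proof.
move=> xB; case sx: (dpart_lt x s); last first.
  rewrite big_pred0 // => y; apply/and3P => -[yx _ sy].
  by rewrite (dpart_lt_leq (ltnW yx) sy) in sx.
rewrite mul1n -(sum_between _ xB) /index_iota subn0.
apply: eq_bigl => y; case: (ltnP y x) => [yx|]; last by rewrite andbF.
by rewrite (dpart_lt_head sx yx) andbT.
Qed.

Lemma eqn_add_sub x a M : (x + a == M) = (x <= M) && (a == M - x).
Proof. by apply/eqP/andP => [xaM|[xM /eqP aMx]]; [split; [|apply/eqP]|]; lia. Qed.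

Section Recurrences.

Variable B : nat.

Definition cntD (n c M : nat) : nat :=
  \sum_(s <- seqs_below n B | dpart_lt c s && (Ostat s == M)) 1.

Definition wsum (w : seq nat -> nat) (n c M : nat) : nat :=
  \sum_(s <- seqs_below n B | dpart_lt c s && (sumn s == M)) w s.

Definition pair_step (f : nat -> nat -> nat) (c M : nat) : nat :=
  \sum_(x <- iota 0 B) \sum_(y <- iota 0 B)
     (if [&& x < c, y < x, 0 < y & x <= M] then f y (M - x) else 0).

Lemma cntD_step n c M : cntD n.+2 c M = pair_step (cntD n) c M.
Proof.
have split_cond x y s : dpart_lt c [:: x, y & s] && (Ostat [:: x, y & s] == M)
    = [&& x < c, y < x, 0 < y & x <= M] && (dpart_lt y s && (Ostat s == M - x)).
  rewrite !dpart_lt_cons Ostat_cons2 eqn_add_sub.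
  case: x => [|x]; first by rewrite ltn0 !andbF.
  by rewrite /= -!andbA; do !bool_congr.
rewrite /cntD /pair_step /= big_mkcond big_allpairs_dep.
apply: eq_bigr => x _; rewrite big_allpairs_dep; apply: eq_bigr => y _.
under eq_bigr do rewrite split_cond.
by case: ifP => _; [rewrite -big_mkcond | rewrite big1].
Qed.

Lemma wsum_step w n c M :
  (forall x s, size s = n -> w (x :: s) = (x - head 0 s - 1) * w s) ->
  wsum w n.+1 c M = pair_step (wsum w n) c M.
Proof.
move=> w_cons; rewrite /wsum /pair_step /= big_mkcond big_allpairs_dep.
apply: eq_big_seq => x; rewrite mem_iota => /andP[_ xB].
rewrite (eq_bigr (fun y => \sum_(s <- seqs_below n B)
    if [&& x < c, y < x, 0 < y & x <= M] && (dpart_lt y s && (sumn s == M - x))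
    then w s else 0)); last first.
  by move=> y _; case: ifP => _; [rewrite big_mkcond | rewrite big1].
rewrite exchange_big; apply: eq_big_seq => s; rewrite mem_seqs_below.
case/andP=> /eqP sn _; rewrite dpart_lt_cons eqn_add_sub w_cons //.
set ws := if [&& x < c, x <= M & sumn s == M - x] then w s else 0.
have -> : \sum_(y <- iota 0 B)
    (if [&& x < c, y < x, 0 < y & x <= M] && (dpart_lt y s && (sumn s == M - x))
     then w s else 0)
    = \sum_(y <- iota 0 B | [&& y < x, 0 < y & dpart_lt y s]) ws.
  rewrite [RHS]big_mkcond /ws; apply: eq_bigr => y _.
  by case: (y < x) (0 < y) (x < c) (x <= M) (dpart_lt y s) => [] [] [] [] [].
rewrite -[ws]mul1n -big_distrl (count_inserts _ (ltnW xB)) {}/ws.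
case: x xB => [|x] _; first by rewrite ltnn !andbF !sub0n muln0 mul0n.
by case: (x.+1 < c) (x.+1 <= M) (dpart_lt x.+1 s) (sumn s == M - x.+1) => [] [] [] [] /=;
  rewrite ?muln0 ?mul0n ?mul1n.
Qed.

Lemma eq_pair_step f g : f =2 g -> pair_step f =2 pair_step g.
Proof.
move=> fg c M; apply: eq_bigr => x _; apply: eq_bigr => y _.
by rewrite fg.
Qed.

Lemma Ostat_small s : size s <= 1 -> Ostat s = sumn s.
Proof. by case: s => [|x []] //= _; rewrite ?Ostat_nil ?Ostat_seq1 ?addn0. Qed.

Lemma cntD_wsum_small w n c M : n <= 1 -> (forall s, size s = n -> w s = 1) ->
  cntD n c M = wsum w n c M.
Proof.
move=> n1 w1; rewrite /cntD /wsum big_mkcond [RHS]big_mkcond.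
apply: eq_big_seq => s; rewrite mem_seqs_below => /andP[/eqP sn _].
by rewrite Ostat_small ?w1 ?sn.
Qed.

Lemma cntD_wsum w v l c M : v <= 1 -> (forall s, size s = v -> w s = 1) ->
  (forall x s, v <= size s -> w (x :: s) = (x - head 0 s - 1) * w s) ->
  cntD (2 * l + v) c M = wsum w (l + v) c M.
Proof.
move=> v1 w_small w_cons; elim: l c M => [|l IH] c M.
  by rewrite muln0 !add0n; apply: cntD_wsum_small.
rewrite mulnS -addnA add2n addSn cntD_step wsum_step.
  exact: eq_pair_step.
by move=> x s sn; rewrite w_cons // sn leq_addl.
Qed.

End Recurrences.

Lemma dpart_lt_partition c s : dpart_lt c s -> is_partition s.
Proof.
case/andP=> cs s_pos; rewrite /is_partition s_pos andbT.
by apply: sub_sorted (path_sorted cs) => a b /ltnW.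
Qed.

Lemma in_D_dpart_lt n B s : size s = n -> all (fun x => x < B) s ->
  in_D n s = dpart_lt B s.
Proof.
move=> sn; rewrite /in_D sn eqxx andbT.
case: s {sn} => [//|x s] /= /andP[xB _]; rewrite /is_partition /dpart_lt /= xB /=.
case xs: (path gtn x s); rewrite ?andbF //= andbT.
by rewrite (sub_path _ xs) // => a b /ltnW.
Qed.

Lemma gf_coef_in_D n M :
  gf_coef n M (in_D n) Ostat (fun _ => 1) = cntD M.+1 n M.+1 M.
Proof.
rewrite /gf_coef (big_tuple_seqs_below n M (fun s => in_D n s && (Ostat s == M)) (fun=> 1)).
rewrite /cntD big_mkcond [RHS]big_mkcond.
apply: eq_big_seq => s; rewrite mem_seqs_below => /andP[/eqP sn sM].
by rewrite (in_D_dpart_lt sn sM).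
Qed.

Lemma gapprod_eq0 s : ~~ sorted (fun a b => b + 2 <= a) s -> gapprod s = 0.
Proof.
elim: s => [//|x [//|y s] IH] /=; rewrite gapprod_cons2.
case: (leqP (y + 2) x) => [_ /IH -> | yx _]; first by rewrite muln0.
by rewrite (_ : x - y - 1 = 0) //; lia.
Qed.

Lemma in_P_dpart_lt m k B s : all (fun x => x < B) s -> in_P m k 2 s -> dpart_lt B s.
Proof.
move=> sB /and4P[/andP[_ s_pos] _ _ s_gap]; rewrite /dpart_lt s_pos andbT.
case: s sB s_gap {s_pos} => [//|x s] /= /andP[xB _] xs; rewrite xB /=.
by apply: sub_path xs => a b /=; lia.
Qed.

Lemma in_P_dpartE m k B s : size s = m -> dpart_lt B s ->
  in_P m k 2 s = sorted (fun a b => b + 2 <= a) s && ((0 < m) ==> (k <= nth 0 s m.-1)).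
Proof. by move=> sn sB; rewrite /in_P (dpart_lt_partition sB) sn eqxx /= andbC. Qed.

Lemma gf_coef_in_P m k M w :
  (forall s, gapprod s = 0 -> w s = 0) ->
  (forall s, size s = m -> 0 < nth 0 s m.-1 < k -> w s = 0) ->
  gf_coef m M (in_P m k 2) psize w = wsum M.+1 w m M.+1 M.
Proof.
move=> w_gap w_last.
rewrite /gf_coef (big_tuple_seqs_below m M (fun s => in_P m k 2 s && (psize s == M)) w).
rewrite /wsum big_mkcond [RHS]big_mkcond; apply: eq_big_seq => s.
rewrite mem_seqs_below => /andP[/eqP sn sM].
case ds: (dpart_lt M.+1 s); last first.
  by case: ifP => // /andP[/(in_P_dpart_lt sM)]; rewrite ds.
rewrite (in_P_dpartE k sn ds) /psize.
case: (boolP (sorted _ s)) => [_|/gapprod_eq0/w_gap ->]; last by rewrite !if_same.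
case: (boolP ((0 < m) ==> _)) => [//|]; rewrite negb_imply -ltnNge => /andP[m0 lt_k].
have last_pos : 0 < nth 0 s m.-1.
  by case/andP: ds => _ /allP; apply; rewrite mem_nth // sn ltn_predL.
by rewrite w_last ?last_pos ?if_same.
Qed.

Theorem theorem9 (l v : nat) (hv : v <= 1) (M : nat) :
  gf_coef (2 * l + v) M (in_D (2 * l + v)) Ostat (fun _ => 1)
  = gf_coef (l + v) M (in_P (l + v) (2 - v) 2) psize
      (fun s => (1 - v) * omega22 s + v * omega1t s).
Proof.
rewrite gf_coef_in_D gf_coef_in_P.
- apply: cntD_wsum => // [s | x s]; case: v hv => [|[|//]] _ /=;
    rewrite ?subn0 ?subnn !mul1n !mul0n ?addn0 ?add0n.
  + by case: s.
  + by case: s => [|x []] //= _; rewrite /omega1t gapprod_seq1.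
  + by move=> _; apply: omega22_cons.
  + by case: s => [|y s] //= _; apply: gapprod_cons2.
- move=> [|x s]; first by rewrite /gapprod big_ord0.
  by rewrite /omega22 /omega1t => ->; rewrite !muln0.
- case: v hv => [|[|//]] _ s; last by move=> _ /andP[]; rewrite subnn; lia.
  rewrite !addn0 subn0 mul1n => sl /andP[last0 last1].
  case: s sl last0 last1 => [<- //|x s] <- *.
  by rewrite /omega22 (_ : nth 0 _ _ - 1 = 0) ?mul0n //; lia.
Qed.
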